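(* Let $\Lambda=(\mathcal{L}\subset\mathbb{R}^s,\mathbb{R}^n)$ be a generic cut-and-project scheme with associated matrix $L$, and let $A\in\mathbb{R}^{n\times n}$ be a non-singular matrix diagonalizable over $\mathbb{C}$ which is a self-similarity of $\Lambda$, with $B\in\mathbb{R}^{(s-n)\times(s-n)}$, $C\in\mathbb{Z}^{s\times s}$ the (unique) matrices such that $\begin{pmatrix}A&O\\O&B\end{pmatrix}L=LC$. Let $\Omega\subset\mathbb{R}^{s-n}$ be bounded with $\overline{\Omega^\circ}=\overline{\Omega}$. Then: (i) if $B\Omega\subset\Omega$, then $A\Sigma(\Omega)\subset\Sigma(\Omega)$; (ii) if $A\Sigma(\Omega)\subset\Sigma(\Omega)$, then $B\overline{\Omega}\subset\overline{\Omega}$.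
   Context: A lattice $\mathcal{L}\subset\mathbb{R}^s$ is $\{L\mathbf{r}:\mathbf{r}\in\mathbb{Z}^s\}$ for a non-singular $L\in\mathbb{R}^{s\times s}$. For $1\le n<s$ the scheme $(\mathcal{L}\subset\mathbb{R}^s,\mathbb{R}^n)$ has projections $\pi_\parallel(\mathbf{x})=(x_1,\dots,x_n)^\top$, $\pi_\perp(\mathbf{x})=(x_{n+1},\dots,x_s)^\top$; it is generic if $\pi_\parallel|_{\mathcal{L}}$, $\pi_\perp|_{\mathcal{L}}$ are injective and $\pi_\perp(\mathcal{L})$ is dense in $\mathbb{R}^{s-n}$. $A$ is a self-similarity of a generic scheme if $A\pi_\parallel(\mathcal{L})\subset\pi_\parallel(\mathcal{L})$ and there exist $C\in\mathbb{Z}^{s\times s}$, $B$ real with $\begin{pmatrix}A&O\\O&B\end{pmatrix}L=LC$. The cut-and-project set is $\Sigma(\Omega)=\{\pi_\parallel(\mathbf{l}):\mathbf{l}\in\mathcal{L},\ \pi_\perp(\mathbf{l})\in\Omega\}$. *)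

From HB Require Import structures.
From mathcomp Require Import all_boot all_order all_algebra.
From mathcomp Require Import all_classical all_reals all_analysis.
From mathcomp Require Import complex.
Set Implicit Arguments. Unset Strict Implicit. Unset Printing Implicit Defensive.
Import Order.TTheory GRing.Theory Num.Theory numFieldNormedType.Exports.
Local Open Scope ring_scope.
Local Open Scope classical_set_scope.

(* Ambient space R^s with s = n + m; vectors are column vectors 'cV[R]_(n+m).
   The first n coordinates are the "physical" space, the last m = s - n the
   "internal" space. *)

Definition lattice (R : realType) (s : nat) (L : 'M[R]_s) : set 'cV[R]_s :=
  [set L *m map_mx intr r | r in [set: 'cV[int]_s]].

Definition ppar (R : realType) (n m : nat) (x : 'cV[R]_(n + m)) : 'cV[R]_n :=
  usubmx x.
Definition pperp (R : realType) (n m : nat) (x : 'cV[R]_(n + m)) : 'cV[R]_m :=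
  dsubmx x.

Definition generic_cps (R : realType) (n m : nat) (L : 'M[R]_(n + m)) : Prop :=
  [/\ L \in unitmx,
      (forall x y, lattice L x -> lattice L y -> ppar x = ppar y -> x = y),
      (forall x y, lattice L x -> lattice L y -> pperp x = pperp y -> x = y)
    & dense (@pperp R n m @` lattice L)].

Definition self_similarity (R : realType) (n m : nat) (L : 'M[R]_(n + m))
    (A : 'M[R]_n) : Prop :=
  (forall x, (@ppar R n m @` lattice L) x ->
     (@ppar R n m @` lattice L) (A *m x)) /\
  exists (C : 'M[int]_(n + m)) (B : 'M[R]_m),
    block_mx A 0 0 B *m L = L *m map_mx intr C.

Definition cps_set (R : realType) (n m : nat) (L : 'M[R]_(n + m))
    (Om : set 'cV[R]_m) : set 'cV[R]_n :=
  [set ppar l | l in [set l | lattice L l /\ Om (pperp l)]].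

Definition diagonalizable_over_C (R : realType) (n : nat) (A : 'M[R]_n) : Prop :=
  diagonalizable (map_mx (fun x : R => Complex x 0) A).

From HB Require Import structures.
From mathcomp Require Import all_boot all_order all_algebra.
From mathcomp Require Import all_classical all_reals all_analysis.
From mathcomp Require Import complex.
Set Implicit Arguments. Unset Strict Implicit. Unset Printing Implicit Defensive.
Import Order.TTheory GRing.Theory Num.Theory numFieldNormedType.Exports.
Local Open Scope ring_scope.
Local Open Scope classical_set_scope.

(* The block matrix diag(A, B) maps the lattice into itself (it is L C L^-1),
   acting as A on the physical and as B on the internal coordinates. This
   gives (i) directly. For (ii), injectivity of the physical projection on
   the lattice shows that the only lattice point above A x_par is diag(A, B) x,
   so B maps every internal coordinate pperp l lying in Om back into Om.
   Since such coordinates are dense and Om is the closure of its interior,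
   continuity of B extends this to the closure. *)

Lemma mulmx_continuous (R : realType) (p q : nat) (B : 'M[R]_(p, q)) :
  continuous (fun w : 'cV[R]_q => B *m w).
Proof.
have -> : (fun w : 'cV[R]_q => B *m w) =
          \sum_k (fun w : 'cV[R]_q => w k 0 *: col k B).
  rewrite fct_sumE; apply/funext => w; apply/matrixP => i j.
  rewrite !mxE summxE; apply: eq_bigr => k _.
  by rewrite !mxE (ord1 j) mulrC.
elim/big_ind: _ => //.
- by move=> x; apply: cst_continuous.
- by move=> f g cf cg x; exact: (continuousD (cf x) (cg x)).
- by move=> k _ x; exact/continuousZr_tmp/coord_continuous.
Qed.

Lemma dense_image_closure_interior (T U : topologicalType) (D O : set T)
    (S : set U) (f : T -> U) :
  dense D -> continuous f ->
  (forall z, D z -> interior O z -> S (f z)) ->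
  f @` closure (interior O) `<=` closure S.
Proof.
move=> denseD cf DOS _ [y clOy <-] V; rewrite nbhsE => -[W [oW Wfy] sWV].
have oOW : open (interior O `&` f @^-1` W).
  by apply: openI; [exact: open_interior | exact: open_comp].
have [z [[Oz Wfz] Dz]] : interior O `&` f @^-1` W `&` D !=set0.
  apply: denseD => //; apply: clOy.
  by apply: open_nbhs_nbhs; split => //; exact: open_comp.
by exists (f z); split; [exact: DOS | exact: sWV].
Qed.

Section BlockSelfSimilarity.
Variables (R : realType) (n m : nat) (L : 'M[R]_(n + m)) (A : 'M[R]_n)
  (B : 'M[R]_m) (C : 'M[int]_(n + m)).
Hypothesis blockL : block_mx A 0 0 B *m L = L *m map_mx intr C.

Let D := block_mx A 0 0 B.

Lemma lattice_block_mul l : lattice L l -> lattice L (D *m l).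
Proof. by move=> [r _ <-]; exists (C *m r) => //; rewrite map_mxM !mulmxA blockL. Qed.

Lemma ppar_block_mul l : ppar (D *m l) = A *m @ppar R n m l.
Proof. by rewrite /ppar -{1}(vsubmxK l) mul_block_col col_mxKu mul0mx addr0. Qed.

Lemma pperp_block_mul l : pperp (D *m l) = B *m @pperp R n m l.
Proof. by rewrite /pperp -{1}(vsubmxK l) mul_block_col col_mxKd mul0mx add0r. Qed.

Lemma cps_set_mul_sub (Om : set 'cV[R]_m) :
  (fun y => B *m y) @` Om `<=` Om ->
  (fun x => A *m x) @` cps_set L Om `<=` cps_set L Om.
Proof.
move=> BOm _ [_ [l [latl Oml] <-] <-].
exists (D *m l); last exact: ppar_block_mul.
split; first exact: lattice_block_mul.
by rewrite pperp_block_mul; apply: BOm; exists (pperp l).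
Qed.

Lemma mul_pperp_mem (Om : set 'cV[R]_m) l :
  (forall x y, lattice L x -> lattice L y -> ppar x = ppar y -> x = y) ->
  (fun x => A *m x) @` cps_set L Om `<=` cps_set L Om ->
  lattice L l -> Om (pperp l) -> Om (B *m pperp l).
Proof.
move=> ppar_inj AOm latl Oml.
have [l' [latl' Oml'] pparl'] : cps_set L Om (A *m ppar l).
  by apply: AOm; exists (ppar l) => //; exists l.
have l'E : l' = D *m l.
  by apply: ppar_inj => //; [exact: lattice_block_mul | rewrite ppar_block_mul].
by rewrite -pperp_block_mul -l'E.
Qed.
End BlockSelfSimilarity.

Theorem proposition9 (R : realType) (n m : nat) (L : 'M[R]_(n + m))
    (A : 'M[R]_n) (B : 'M[R]_m) (C : 'M[int]_(n + m)) (Om : set 'cV[R]_m) :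
  (0 < n)%N -> (0 < m)%N ->
  generic_cps L ->
  A \in unitmx -> diagonalizable_over_C A ->
  self_similarity L A ->
  block_mx A 0 0 B *m L = L *m map_mx intr C ->
  bounded_set Om -> closure (interior Om) = closure Om ->
  ((fun y => B *m y) @` Om `<=` Om ->
     (fun x => A *m x) @` cps_set L Om `<=` cps_set L Om) /\
  ((fun x => A *m x) @` cps_set L Om `<=` cps_set L Om ->
     (fun y => B *m y) @` closure Om `<=` closure Om).
Proof.
move=> _ _ [_ ppar_inj _ dense_pperp] _ _ _ blockL _ clOm.
split; first exact: (cps_set_mul_sub blockL).
move=> AOm; rewrite -{1}clOm.
apply: dense_image_closure_interior dense_pperp _ _; first exact: mulmx_continuous.
move=> _ [l latl <-] /interior_subset Oml.
exact (mul_pperp_mem blockL ppar_inj AOm latl Oml).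
Qed.
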